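(* There exist an alphabet $A$ and words $\mathbf a,\mathbf b,\mathbf c,\mathbf d\in A^\ast$ with $\mathbf a\mathbf b=\mathbf c\mathbf d$ such that $\mathbf a:\mathbf b::_m\mathbf c:\mathbf d$ does not hold in $(A^\ast,\cdot,A^\ast)$.
   Context: $(A^\ast,\cdot,A^\ast)$ is the algebra whose universe is the set $A^\ast$ of all finite words over $A$ (including the empty word), with concatenation and every word as a constant. A justification is a pair of terms $s\to t$ with the variables of $t$ among those of $s$; monolinear justifications are those where $s,t$ contain only one fixed variable $x$, occurring at most once in $s$ and at most once in $t$. $\uparrow^m(\mathbf a\to\mathbf b)$ is the set of monolinear justifications $s\to t$ with $\mathbf a=s(\mathbf o)$, $\mathbf b=t(\mathbf o)$ for some value $\mathbf o$; $\uparrow^m(\mathbf a\to\mathbf b:\!\cdot\,\mathbf c\to\mathbf d):=\uparrow^m(\mathbf a\to\mathbf b)\cap\uparrow^m(\mathbf c\to\mathbf d)$. A monolinear justification is trivial if it lies in all sets $\uparrow^m(\mathbf a'\to\mathbf b':\!\cdot\,\mathbf c'\to\mathbf d')$. $\mathbf a\to\mathbf b:\!\cdot_m\,\mathbf c\to\mathbf d$ holds iff either (i) all justifications in $\uparrow^m(\mathbf a\to\mathbf b)\cup\uparrow^m(\mathbf c\to\mathbf d)$ are trivial, or (ii) $J_{\mathbf d}:=\uparrow^m(\mathbf a\to\mathbf b:\!\cdot\,\mathbf c\to\mathbf d)$ contains a non-trivial justification and for every $\mathbf d'$, $J_{\mathbf d}\subseteq J_{\mathbf d'}$ implies $J_{\mathbf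 d'}$ contains a non-trivial justification and $J_{\mathbf d'}\subseteq J_{\mathbf d}$ (ignoring trivial justifications). $\mathbf a:\mathbf b::_m\mathbf c:\mathbf d$ iff $\mathbf a\to\mathbf b:\!\cdot_m\,\mathbf c\to\mathbf d$, $\mathbf b\to\mathbf a:\!\cdot_m\,\mathbf d\to\mathbf c$, $\mathbf c\to\mathbf d:\!\cdot_m\,\mathbf a\to\mathbf b$, $\mathbf d\to\mathbf c:\!\cdot_m\,\mathbf b\to\mathbf a$ all hold. *)

From mathcomp Require Import all_boot.
Set Implicit Arguments. Unset Strict Implicit. Unset Printing Implicit Defensive.

(* Terms of the algebra (A-star, concatenation, A-star) in the single fixed variable x:
   the variable x, a constant (any word), or a concatenation of two terms. *)
Inductive term (A : Type) : Type :=
  | TVar : term A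
  | TConst : seq A -> term A
  | TCat : term A -> term A -> term A.
Arguments TVar {A}.

Fixpoint teval (A : Type) (s : term A) (o : seq A) : seq A :=
  match s with
  | TVar => o
  | TConst w => w
  | TCat s1 s2 => teval s1 o ++ teval s2 o
  end.

Fixpoint tocc (A : Type) (s : term A) : nat :=
  match s with
  | TVar => 1
  | TConst _ => 0
  | TCat s1 s2 => tocc s1 + tocc s2
  end.

Definition justification (A : Type) := (term A * term A)%type.

(* monolinear justification: x occurs at most once in s and in t, and the
   variables of t are among those of s *)
Definition monolinear (A : Type) (j : justification A) : Prop :=
  tocc j.1 <= 1 /\ tocc j.2 <= 1 /\ (0 < tocc j.2 -> 0 < tocc j.1).

Definition upm (A : Type) (a b : seq A) (j : justification A) : Prop :=
  monolinear j /\ exists o : seq A, teval j.1 o = a /\ teval j.2 o = b.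

Definition upm2 (A : Type) (a b c d : seq A) (j : justification A) : Prop :=
  upm a b j /\ upm c d j.

Definition trivialJ (A : Type) (j : justification A) : Prop :=
  monolinear j /\ forall a' b' c' d' : seq A, upm2 a' b' c' d' j.

Definition arrow_m (A : Type) (a b c d : seq A) : Prop :=
  (forall j, upm a b j \/ upm c d j -> trivialJ j)
  \/
  ((exists j, upm2 a b c d j /\ ~ trivialJ j) /\
   forall d' : seq A,
     (forall j, ~ trivialJ j -> upm2 a b c d j -> upm2 a b c d' j) ->
     (exists j, upm2 a b c d' j /\ ~ trivialJ j) /\
     (forall j, ~ trivialJ j -> upm2 a b c d' j -> upm2 a b c d j)).

Definition prop_m (A : Type) (a b c d : seq A) : Prop :=
  arrow_m a b c d /\ arrow_m b a d c /\ arrow_m c d a b /\ arrow_m d c b a.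

From mathcomp Require Import all_boot.
Set Implicit Arguments. Unset Strict Implicit. Unset Printing Implicit Defensive.

(* Take a = d = ε and b = c = w ≠ ε.  A justification s -> t in both
   ↑(ε -> w) and ↑(w -> ε) changes value with the assignment, so x occurs in
   s and in t; then s(o) = ε and t(o') = ε force o = o' = ε, whence w = ε.
   Hence clause (ii) of :·_m fails, and clause (i) fails because the constant
   justification ε -> w is not trivial. *)

Lemma teval_ground (A : Type) (s : term A) (o o' : seq A) :
  tocc s = 0 -> teval s o = teval s o'.
Proof.
elim: s => //= s1 IH1 s2 IH2 /eqP; rewrite addn_eq0 => /andP[/eqP h1 /eqP h2].
by rewrite (IH1 h1) (IH2 h2).
Qed.

Lemma size_teval_ge (A : Type) (s : term A) (o : seq A) :
  0 < tocc s -> size o <= size (teval s o).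
Proof.
elim: s => //= s1 IH1 s2 IH2 s_var; rewrite size_cat.
have [s1_ground | /IH1 le_o_s1] := posnP (tocc s1).
  by rewrite (leq_trans (IH2 _)) ?leq_addl //; rewrite s1_ground in s_var.
by rewrite (leq_trans le_o_s1) ?leq_addr.
Qed.

Lemma teval_nil_var (A : Type) (s : term A) (o : seq A) :
  0 < tocc s -> teval s o = [::] -> o = [::].
Proof. by move=> /(size_teval_ge o) + s_nil; rewrite s_nil leqn0 => /nilP. Qed.

Lemma upm2_nil_swap (A : Type) (w : seq A) (j : justification A) :
  upm2 [::] w w [::] j -> w = [::].
Proof.
case: j => s t [[_ [o1 [/= s1 t1]]] [_ [o2 [/= s2 t2]]]].
have [s_ground | s_var] := posnP (tocc s).
  by rewrite -s2 -s1 (teval_ground o1 o2 s_ground).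
have [t_ground | t_var] := posnP (tocc t).
  by rewrite -t1 -t2 (teval_ground o1 o2 t_ground).
have o1_nil := teval_nil_var s_var s1.
have o2_nil := teval_nil_var t_var t2.
by rewrite -s2 o2_nil -{1}o1_nil.
Qed.

Lemma upm_const (A : Type) (a b : seq A) : upm a b (TConst a, TConst b).
Proof. by split; [|exists [::]]. Qed.

Lemma const_not_trivialJ (A : Type) (x : A) (a b : seq A) :
  ~ trivialJ (TConst a, TConst b).
Proof.
case=> _ /(_ (x :: a) [::] [::] [::]) [[_ [o [/= a_xa _]]] _].
exact: n_Sn (f_equal size a_xa).
Qed.

Lemma arrow_m_nil_swap (A : Type) (w : seq A) :
  w <> [::] -> ~ arrow_m [::] w w [::].
Proof.
case: w => [/(_ erefl) [] | x w _]; case=> [all_trivial | [[j [j_up2 _]] _]].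
  exact: const_not_trivialJ x _ _ (all_trivial _ (or_introl (upm_const _ _))).
by have := upm2_nil_swap j_up2.
Qed.

Theorem mainTheorem13 :
  exists (A : finType) (a b c d : seq A), a ++ b = c ++ d /\ ~ prop_m a b c d.
Proof.
exists bool, [::], [:: true], [:: true], [::]; split=> //.
by case=> arrow_ab_cd _; apply: arrow_m_nil_swap arrow_ab_cd.
Qed.
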